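(* Let $\mathcal{C}$ be a permutation class (resp. polyomino class). If the $p$-basis of $\mathcal{C}$ is also a minimal $m$-basis of $\mathcal{C}$, then it is the unique minimal $m$-basis of $\mathcal{C}$.
   Context: Binary matrices have entries in $\{0,1\}$; $M'\preccurlyeq M$ (submatrix order) means $M'$ is obtained from $M$ by deleting some rows and/or columns. A permutation $\sigma$ of $\{1,\dots,n\}$ is identified with its permutation matrix ($M_\sigma(i,j)=1$ iff $i=\sigma(j)$); a permutation class is a set of permutations closed under taking submatrices that are permutation matrices (i.e. under taking patterns). A polyomino is a finite edge-connected union of unit cells of $\mathbb{Z}^2$ up to translation, identified with the binary matrix of its minimal bounding rectangle ($1$ for cells, $0$ otherwise); a polyomino class is a set of polyominoes closed under taking submatrices that are polyominoes. $Av(\mathcal{M})$ denotes the set of permutations (resp. polyominoes) with no submatrix in $\mathcal{M}$. The $p$-basis of a class $\mathcal{C}$ is the set of permutations (resp. polyominoes) not in $\mathcal{C}$ that are minimal for the submatrix order among permutations (resp. polyominoes) not in $\mathcal{C}$; it is the unique antichain $\mathcal{B}$ of permutations (resp. polyominoes) with $\mathcal{C}=Av(\mathcal{B})$. An $m$-basis of $\mathcal{C}$ is an antichain $\mathcal{M}$ of binary matrices (for $\preccurlyeq$) with $\mathcal{C}=Av(\mathcal{M})$. A minimal $m$-basis of $\mathcal{C}$ is an $m$-basis $\mathcal{M}$ such that (1) no strict subset $\mathcal{M}'\subsetneq\mathcal{M}$ satisfies $\mathcal{C}=Av(\mathcal{M}')$, and (2) for every $M\in\mathcal{M}$ and every submatrix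 $M'\preccurlyeq M$, either $M'=M$ or $\mathcal{C}\neq Av\big((\mathcal{M}\setminus\{M\})\cup\{M'\}\big)$. *)

From mathcomp Require Import all_boot all_algebra.
Set Implicit Arguments. Unset Strict Implicit. Unset Printing Implicit Defensive.

Record bmat := BMat { nr : nat; nc : nat; ent : 'M[bool]_(nr, nc) }.

(* Submatrix order: M' is obtained from M by deleting rows and/or columns,
   i.e. it is the restriction of M to an increasing choice of rows/columns. *)
Definition submx (M' M : bmat) : Prop :=
  exists (f : 'I_(nr M') -> 'I_(nr M)) (g : 'I_(nc M') -> 'I_(nc M)),
    (forall i1 i2 : 'I_(nr M'), i1 < i2 -> f i1 < f i2) /\
    (forall j1 j2 : 'I_(nc M'), j1 < j2 -> g j1 < g j2) /\
    (forall i j, ent M' i j = ent M (f i) (g j)).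

Notation "A ≼ B" := (submx A B) (at level 70).

Definition is_perm (M : bmat) : Prop :=
  nr M = nc M /\
  (forall i, #|[set j | ent M i j]| = 1) /\
  (forall j, #|[set i | ent M i j]| = 1).

Definition cell_adj (M : bmat) : rel ('I_(nr M) * 'I_(nc M)) :=
  fun a b =>
    [&& ent M a.1 a.2, ent M b.1 b.2 &
        ((a.1 == b.1) && ((a.2.+1 == b.2) || (b.2.+1 == a.2))) ||
        ((a.2 == b.2) && ((a.1.+1 == b.1) || (b.1.+1 == a.1)))].

(* Polyomino matrices: the binary matrix of the minimal bounding rectangle
   of a (nonempty) edge-connected finite set of cells. *)
Definition is_polyomino (M : bmat) : Prop :=
  (exists i j, ent M i j) /\
  (forall i, exists j, ent M i j) /\
  (forall j, exists i, ent M i j) /\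
  (forall a b : 'I_(nr M) * 'I_(nc M),
      ent M a.1 a.2 -> ent M b.1 b.2 -> connect (@cell_adj M) a b).

Definition is_class (P : bmat -> Prop) (C : bmat -> Prop) : Prop :=
  (forall x, C x -> P x) /\
  (forall x y, C x -> P y -> y ≼ x -> C y).

Definition Av (P : bmat -> Prop) (S : bmat -> Prop) : bmat -> Prop :=
  fun x => P x /\ forall y, y ≼ x -> ~ S y.

Definition set_eq (A B : bmat -> Prop) : Prop := forall x, A x <-> B x.

Definition pbasis (P : bmat -> Prop) (C : bmat -> Prop) : bmat -> Prop :=
  fun x => P x /\ ~ C x /\ (forall y, P y -> ~ C y -> y ≼ x -> y = x).

Definition antichain (S : bmat -> Prop) : Prop :=
  forall A B, S A -> S B -> A ≼ B -> A = B.

Definition mbasis (P : bmat -> Prop) (C : bmat -> Prop) (S : bmat -> Prop) :=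
  antichain S /\ set_eq C (Av P S).

Definition minimal_mbasis (P : bmat -> Prop) (C : bmat -> Prop)
    (S : bmat -> Prop) : Prop :=
  mbasis P C S /\
  (forall S' : bmat -> Prop, (forall x, S' x -> S x) ->
      (exists x, S x /\ ~ S' x) -> ~ set_eq C (Av P S')) /\
  (* (2) no element can be replaced by a proper submatrix *)
  (forall M M', S M -> M' ≼ M ->
      M' = M \/
      ~ set_eq C (Av P (fun x => (S x /\ x <> M) \/ x = M'))).

From mathcomp Require Import all_boot all_algebra.
From Stdlib Require Import Classical.

(* Every p-basis element b lies outside C = Av(S), so some s in S sits below b.
   Replacing b by s in the p-basis does not change the class: a P-object
   avoiding s and the rest of the p-basis also avoids b, since s ≼ b.  Minimality
   condition (2) of the p-basis then forces s = b, so the p-basis is contained in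
   every m-basis S, and condition (1) of S forces equality.  Neither the class
   axioms nor the choice of P (permutations or polyominoes) play any role. *)

Lemma submx_trans {A B D : bmat} : A ≼ B -> B ≼ D -> A ≼ D.
Proof.
move=> [f [g [hf [hg he]]]] [f' [g' [hf' [hg' he']]]].
exists (fun i => f' (f i)), (fun j => g' (g j)); split; last split.
- by move=> i1 i2 h; apply: hf'; apply: hf.
- by move=> j1 j2 h; apply: hg'; apply: hg.
- by move=> i j; rewrite he he'.
Qed.

Section Basis.

Variables (P C : bmat -> Prop).
Implicit Types (B S : bmat -> Prop) (b s : bmat).

Lemma pbasis_has_sub_in_mbasis {S b} :
  set_eq C (Av P S) -> pbasis P C b -> exists2 s, s ≼ b & S s.
Proof.
move=> eqS [Pb [nCb _]]; apply: NNPP => noS; apply: nCb; apply/eqS.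
by split=> // y yb Sy; apply: noS; exists y.
Qed.

Lemma Av_replace_sub {B S b s} :
  set_eq C (Av P B) -> set_eq C (Av P S) -> S s -> s ≼ b ->
  set_eq C (Av P (fun x => (B x /\ x <> b) \/ x = s)).
Proof.
move=> eqB eqS Ss sb x; split.
- move=> Cx; have [Px avB] := proj1 (eqB x) Cx; have [_ avS] := proj1 (eqS x) Cx.
  split=> // y yx [[By _] | ys]; first exact: avB y yx By.
  by rewrite ys in yx; exact: avS s yx Ss.
- move=> [Px av]; apply/eqB; split=> // y yx By.
  have [eyb | neb] := classic (y = b).
    by rewrite eyb in yx; exact: av s (submx_trans sb yx) (or_intror erefl).
  exact: av y yx (or_introl (conj By neb)).
Qed.

Lemma pbasis_sub_mbasis {S} :
  minimal_mbasis P C (pbasis P C) -> set_eq C (Av P S) ->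
  forall b, pbasis P C b -> S b.
Proof.
move=> [[_ eqB] [_ replaceB]] eqS b Bb.
have [s sb Ss] := pbasis_has_sub_in_mbasis eqS Bb.
case: (replaceB b s Bb sb) => [<- // | not_eq].
by case: not_eq; exact: Av_replace_sub eqB eqS Ss sb.
Qed.

Lemma minimal_mbasis_eq_pbasis {S} :
  minimal_mbasis P C (pbasis P C) -> minimal_mbasis P C S ->
  set_eq S (pbasis P C).
Proof.
move=> minB [[_ eqS] [minS _]].
have BS := pbasis_sub_mbasis minB eqS.
have [[_ eqB] _] := minB.
move=> x; split; last exact: BS.
move=> Sx; apply: NNPP => nBx.
by apply: (minS (pbasis P C) BS); first exists x.
Qed.

End Basis.

Theorem proposition6 :
  (forall C : bmat -> Prop, is_class is_perm C ->
     minimal_mbasis is_perm C (pbasis is_perm C) ->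
     forall S, minimal_mbasis is_perm C S -> set_eq S (pbasis is_perm C)) /\
  (forall C : bmat -> Prop, is_class is_polyomino C ->
     minimal_mbasis is_polyomino C (pbasis is_polyomino C) ->
     forall S, minimal_mbasis is_polyomino C S ->
       set_eq S (pbasis is_polyomino C)).
Proof.
by split=> C _ minB S minS; exact: minimal_mbasis_eq_pbasis minB minS.
Qed.
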